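(* Let $n,k\geq 1$ be integers and let $A_1,\dots,A_k,B_1,\dots,B_k\in\mathbb{R}$. For $\alpha\in\mathbb{C}$ put $a_i=A_i+B_i\alpha$ ($i=1,\dots,k$) and $$O_\alpha(z)=z^n\,\frac{a_k+a_{k-1}z+\dots+a_1 z^{k-1}+z^k}{1+a_1 z+\dots+a_{k-1}z^{k-1}+a_k z^k},$$ considered for those $\alpha$ with $a_k\neq 0$ and $1+a_1+\dots+a_k\neq 0$; for such $\alpha$, $z=1$ is a fixed point of $O_\alpha$. Define $$A=n+k+\sum_{j=1}^k(n+k-2j)A_j,\quad B=\sum_{j=1}^k(n+k-2j)B_j,\quad A'=1+\sum_{j=1}^kA_j,\quad B'=\sum_{j=1}^kB_j,$$ and, when $B^2-B'^2\neq0$, $c=(AB-A'B')/(B^2-B'^2)$ and $r=(A'B-AB')/(B^2-B'^2)$. Then: \begin{enumerate} \item If $B^2-B'^2\neq 0$: (i) $z=1$ is indifferent on the circle $C:\ |\alpha+c|=|r|$; (ii) $z=1$ is attracting inside $C$ if $B^2-B'^2>0$ and outside $C$ if $B^2-B'^2<0$; (iii) $z=1$ is repelling outside $C$ if $B^2-B'^2>0$ and inside $C$ if $B^2-B'^2<0$. \item If $B^2-B'^2=0$: (a) if $B=B'\neq0$: $z=1$ is indifferent if $A=A'$; $z=1$ is attracting if either $\mathrm{Re}(\alpha)<-\frac{A+A'}{2B}$ and $B(A-A')>0$, or $\mathrm{Re}(\alpha)>-\frac{A+A'}{2B}$ and $B(A-A')<0$; $z=1$ is repelling otherwise. (b) if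 $B=-B'\neq0$: $z=1$ is indifferent if $A=-A'$; $z=1$ is attracting if either $\mathrm{Re}(\alpha)<\frac{A'-A}{2B}$ and $B(A+A')>0$, or $\mathrm{Re}(\alpha)>\frac{A'-A}{2B}$ and $B(A+A')<0$; $z=1$ is repelling otherwise. (c) if $B=B'=0$: $z=1$ is indifferent if $|A|=|A'|$, attracting if $|A|<|A'|$, and repelling if $|A|>|A'|$. \end{enumerate} Moreover, if $\alpha=-A/B$, the fixed point $z=1$ is superattracting.
   Context: For a fixed point $z_0$ of a rational map $R$ with multiplier $\lambda=R'(z_0)$, $z_0$ is attracting if $|\lambda|<1$, superattracting if $\lambda=0$, repelling if $|\lambda|>1$, and indifferent if $|\lambda|=1$. *)

From Stdlib Require Import Reals.
From Coquelicot Require Import Coquelicot.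
Open Scope R_scope.

Definition is_multiplier (f : C -> C) (z0 : C) (l : C) : Prop :=
  is_derive (K := C_AbsRing) (V := C_NormedModule) f z0 l.

Definition fixed_point (f : C -> C) (z0 : C) : Prop := f z0 = z0.

Definition attracting (f : C -> C) (z0 : C) : Prop :=
  fixed_point f z0 /\ exists l, is_multiplier f z0 l /\ Cmod l < 1.
Definition superattracting (f : C -> C) (z0 : C) : Prop :=
  fixed_point f z0 /\ is_multiplier f z0 (RtoC 0).
Definition repelling (f : C -> C) (z0 : C) : Prop :=
  fixed_point f z0 /\ exists l, is_multiplier f z0 l /\ Cmod l > 1.
Definition indifferent (f : C -> C) (z0 : C) : Prop :=
  fixed_point f z0 /\ exists l, is_multiplier f z0 l /\ Cmod l = 1.

Definition cpow (z : C) (m : nat) : C := pow_n (K := C_Ring) z m.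

(* a_i = A_i + B_i alpha  (indices i = 1..k are used) *)
Definition acoef (An Bn : nat -> R) (alpha : C) (i : nat) : C :=
  Cplus (RtoC (An i)) (Cmult (RtoC (Bn i)) alpha).

Definition Onum (k : nat) (An Bn : nat -> R) (alpha z : C) : C :=
  Cplus (cpow z k)
    (sum_n_m (G := C_AbelianMonoid)
       (fun j => Cmult (acoef An Bn alpha j) (cpow z (k - j))) 1 k).

Definition Oden (k : nat) (An Bn : nat -> R) (alpha z : C) : C :=
  Cplus (RtoC 1)
    (sum_n_m (G := C_AbelianMonoid)
       (fun j => Cmult (acoef An Bn alpha j) (cpow z j)) 1 k).

Definition Omap (n k : nat) (An Bn : nat -> R) (alpha : C) (z : C) : C :=
  Cmult (cpow z n) (Cdiv (Onum k An Bn alpha z) (Oden k An Bn alpha z)).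

Definition admissible (k : nat) (An Bn : nat -> R) (alpha : C) : Prop :=
  acoef An Bn alpha k <> RtoC 0 /\
  Cplus (RtoC 1) (sum_n_m (G := C_AbelianMonoid) (fun j => acoef An Bn alpha j) 1 k)
    <> RtoC 0.

Definition Acst (n k : nat) (An : nat -> R) : R :=
  INR n + INR k +
  sum_n_m (G := R_AbelianMonoid) (fun j => (INR n + INR k - 2 * INR j) * An j) 1 k.
Definition Bcst (n k : nat) (Bn : nat -> R) : R :=
  sum_n_m (G := R_AbelianMonoid) (fun j => (INR n + INR k - 2 * INR j) * Bn j) 1 k.
Definition A'cst (k : nat) (An : nat -> R) : R :=
  1 + sum_n_m (G := R_AbelianMonoid) An 1 k.
Definition B'cst (k : nat) (Bn : nat -> R) : R :=
  sum_n_m (G := R_AbelianMonoid) Bn 1 k.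

(* At z = 1 the numerator N and the denominator Q of O_alpha both equal
   S = 1 + a_1 + ... + a_k = A' + B' alpha, so 1 is fixed and
   O_alpha'(1) = n + (N'(1) - Q'(1)) / S.  As N'(1) - Q'(1) = k + sum_j (k - 2j) a_j,
   the multiplier is (A + B alpha) / (A' + B' alpha), and the type of the fixed point
   is the sign of |A + B alpha|^2 - |A' + B' alpha|^2
   = (B^2 - B'^2) |alpha|^2 + 2 (A B - A' B') Re alpha + A^2 - A'^2.
   This is (B^2 - B'^2) (|alpha + c|^2 - r^2) when B^2 <> B'^2 and affine in Re alpha
   otherwise; alpha = -A/B kills the multiplier. *)

From Stdlib Require Import Reals Lra Lia Arith.
From Coquelicot Require Import Coquelicot.
Open Scope R_scope.

Lemma is_derive_sum_n_m {K : AbsRing} {V : NormedModule K}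
  (f : nat -> K -> V) (d : nat -> V) (x : K) (m n : nat) :
  (forall j, (m <= j <= n)%nat -> is_derive (f j) x (d j)) ->
  is_derive (fun z => sum_n_m (fun j => f j z) m n) x (sum_n_m d m n).
Proof.
  intros Hd; destruct (le_lt_dec m n) as [Hmn | Hnm].
  - induction Hmn as [|n Hmn IH].
    + apply (is_derive_ext (f m)); [intros z; symmetry; apply (sum_n_n (fun j => f j z))|].
      rewrite sum_n_n; apply Hd; lia.
    + apply (is_derive_ext (fun z => plus (sum_n_m (fun j => f j z) m n) (f (S n) z))).
      { intros z; symmetry; apply sum_n_Sm; lia. }
      rewrite sum_n_Sm by lia.
      apply is_derive_plus; [apply IH; intros; apply Hd; lia | apply Hd; lia].
  - apply (is_derive_ext (fun _ => zero)); [intros z; symmetry; apply sum_n_m_zero, Hnm|].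
    rewrite sum_n_m_zero by exact Hnm; apply is_derive_const.
Qed.

Lemma sum_n_m_additive {G H : AbelianMonoid} (phi : G -> H) (u : nat -> G) (m n : nat) :
  phi zero = zero -> (forall a b, phi (plus a b) = plus (phi a) (phi b)) ->
  phi (sum_n_m u m n) = sum_n_m (fun j => phi (u j)) m n.
Proof.
  intros Hzero Hplus; destruct (le_lt_dec m n) as [Hmn | Hnm].
  - induction Hmn as [|n Hmn IH]; [now rewrite !sum_n_n|].
    now rewrite !sum_n_Sm, Hplus, IH by lia.
  - now rewrite !sum_n_m_zero.
Qed.

(* Derivatives are computed with values in [AbsRing_NormedModule C_AbsRing], whose balls
   are Cmod-balls, instead of Coquelicot's [C_NormedModule] used by [is_multiplier]. *)
Notation is_Cderive := (@is_derive C_AbsRing (AbsRing_NormedModule C_AbsRing)).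

(* [ring] and [field] only recognise equations stated at type [C]. *)
Ltac as_C_equation := match goal with |- ?a = ?b => change (@eq C a b) end.

Lemma is_multiplier_of_is_Cderive (f : C -> C) (z l : C) :
  is_Cderive f z l -> is_multiplier f z l.
Proof.
  intros [[Hadd Hscal [M [HM Hb]]] Hdiff]; split.
  - split; [exact Hadd | exact Hscal | now exists M].
  - exact Hdiff.
Qed.

Section ComplexDerivatives.
Local Open Scope C_scope.

Lemma is_Cderive_of_quadratic_remainder (f : C -> C) (w l : C) (delta M : R) :
  (0 < delta)%R ->
  (forall y, (Cmod (y - w) < delta)%R ->
     (Cmod (f y - f w - (y - w) * l) <= M * Cmod (y - w) ^ 2)%R) ->
  is_Cderive f w l.
Proof.
  intros Hdelta Hrem; split; [apply is_linear_scal_l|].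
  intros x Hx.
  apply (is_filter_lim_locally_unique (V := AbsRing_NormedModule C_AbsRing)) in Hx; subst x.
  intros eps.
  assert (HM : (0 < Rabs M + 1)%R) by (pose proof (Rabs_pos M); lra).
  assert (Hpos : (0 < Rmin delta (eps / (Rabs M + 1)))%R).
  { apply Rmin_glb_lt; [lra|]. apply Rdiv_lt_0_compat; [apply cond_pos | exact HM]. }
  exists (mkposreal _ Hpos); intros y Hy.
  change (Cmod (y - w) < Rmin delta (eps / (Rabs M + 1)))%R in Hy.
  change (Cmod (f y - f w - (y - w) * l) <= eps * Cmod (y - w))%R.
  set (m := Cmod (y - w)) in *.
  assert (Hm0 : (0 <= m)%R) by apply Cmod_ge_0.
  assert (Hmeps : (m * (Rabs M + 1) < eps)%R).
  { apply (Rmin_Rgt_l delta) in Hy as [_ Hy].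
    apply Rlt_div_r in Hy; lra. }
  eapply Rle_trans; [apply Hrem; eapply Rlt_le_trans; [exact Hy | apply Rmin_l]|].
  pose proof (Rle_abs M).
  assert (0 <= m * (eps - m * (Rabs M + 1)))%R by (apply Rmult_le_pos; lra).
  change (M * m ^ 2 <= eps * m)%R. nra.
Qed.

Lemma is_Cderive_Cinv (w : C) : w <> 0 -> is_Cderive Cinv w (- / (w * w)).
Proof.
  intros Hw; apply Cmod_gt_0 in Hw as HW.
  apply (is_Cderive_of_quadratic_remainder _ _ _ (Cmod w / 2) (2 / Cmod w ^ 3));
    [lra|].
  intros y Hy.
  assert (HY : (Cmod w / 2 <= Cmod y)%R).
  { pose proof (Cmod_triangle y (- (y - w))) as Htri.
    rewrite Cmod_opp in Htri; replace (y + - (y - w)) with w in Htri by ring; lra. }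
  assert (Hy0 : y <> 0) by (apply Cmod_gt_0; lra).
  replace (/ y - / w - (y - w) * - / (w * w)) with ((y - w) * (y - w) / (y * (w * w)))
    by (field; auto).
  rewrite Cmod_div, !Cmod_mult by (apply Cmod_gt_0; rewrite !Cmod_mult;
    apply Rmult_lt_0_compat; [|apply Rmult_lt_0_compat]; lra).
  apply Rle_trans with (Cmod (y - w) * Cmod (y - w) / (Cmod w / 2 * (Cmod w * Cmod w)))%R.
  - apply Rmult_le_compat_l; [apply Rle_0_sqr|].
    apply Rinv_le_contravar;
      [apply Rmult_lt_0_compat; [|apply Rmult_lt_0_compat]; lra|].
    apply Rmult_le_compat_r; nra.
  - right; field; lra.
Qed.

Lemma nat_to_ring_C (m : nat) : nat_to_ring (K := C_Ring) m = RtoC (INR m).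
Proof.
  induction m as [|m IH]; [reflexivity|].
  rewrite nat_to_ring_Sn, IH, S_INR, RtoC_plus; reflexivity.
Qed.

Lemma is_Cderive_cpow (x : C) (m : nat) :
  is_Cderive (fun z => cpow z m) x (INR m * cpow x (pred m)).
Proof.
  rewrite <- nat_to_ring_C.
  apply (filterdiff_pow_n (K := C_AbsRing)), Cmult_comm.
Qed.

Lemma is_Cderive_const (a x : C) : is_Cderive (fun _ => a) x (RtoC 0).
Proof. exact (is_derive_const (V := AbsRing_NormedModule C_AbsRing) a x). Qed.

Lemma is_Cderive_plus (f g : C -> C) (x df dg : C) :
  is_Cderive f x df -> is_Cderive g x dg -> is_Cderive (fun z => f z + g z) x (df + dg).
Proof. exact (is_derive_plus (V := AbsRing_NormedModule C_AbsRing) f g x df dg). Qed.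

Lemma is_Cderive_mult (f g : C -> C) (x df dg : C) :
  is_Cderive f x df -> is_Cderive g x dg ->
  is_Cderive (fun z => f z * g z) x (df * g x + f x * dg).
Proof. intros Hf Hg; exact (is_derive_mult f g x df dg Hf Hg Cmult_comm). Qed.

Lemma is_Cderive_div (f g : C -> C) (x df dg : C) :
  g x <> 0 -> is_Cderive f x df -> is_Cderive g x dg ->
  is_Cderive (fun z => f z / g z) x ((df * g x - f x * dg) / (g x * g x)).
Proof.
  intros Hgx Hf Hg.
  assert (Hinv : is_Cderive (fun z => / g z) x (dg * - / (g x * g x)))
    by exact (is_derive_comp (V := AbsRing_NormedModule C_AbsRing) Cinv g x _ dg
                (is_Cderive_Cinv _ Hgx) Hg).
  eapply (eq_ind _ (is_Cderive (fun z => f z / g z) x));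
    [exact (is_Cderive_mult _ _ _ _ _ Hf Hinv)|].
  as_C_equation; cbv beta; field; exact Hgx.
Qed.

End ComplexDerivatives.



Section AffineSums.
Local Open Scope C_scope.

Lemma RtoC_sum_n_m (u : nat -> R) (m n : nat) :
  RtoC (sum_n_m u m n) = sum_n_m (G := C_AbelianMonoid) (fun j => RtoC (u j)) m n.
Proof. apply (sum_n_m_additive RtoC); [reflexivity | apply RtoC_plus]. Qed.

Lemma sum_n_m_RtoC_affine (f g : nat -> R) (alpha : C) (m n : nat) :
  sum_n_m (G := C_AbelianMonoid) (fun j => f j + g j * alpha) m n
  = sum_n_m f m n + sum_n_m g m n * alpha.
Proof.
  rewrite (sum_n_m_plus (G := C_AbelianMonoid)), (sum_n_m_mult_r (K := C_Ring)).
  now rewrite !RtoC_sum_n_m.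
Qed.

End AffineSums.

Lemma cpow_1 (m : nat) : cpow 1 m = 1.
Proof.
  induction m as [|m IH]; [reflexivity|].
  change (Cmult 1 (cpow 1 m) = 1); rewrite IH; apply Cmult_1_l.
Qed.

Section PolynomialsAt1.
Local Open Scope C_scope.

Lemma sum_monomials_at_1 (c : nat -> C) (e : nat -> nat) (p q : nat) :
  sum_n_m (G := C_AbelianMonoid) (fun j => c j * cpow 1 (e j)) p q
  = sum_n_m (G := C_AbelianMonoid) c p q.
Proof. apply sum_n_m_ext; intros j; rewrite cpow_1; apply Cmult_1_r. Qed.

Lemma is_Cderive_sum_monomials_at_1 (c : nat -> C) (e : nat -> nat) (p q : nat) :
  is_Cderive (fun z => sum_n_m (G := C_AbelianMonoid) (fun j => c j * cpow z (e j)) p q)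
    (RtoC 1)
    (sum_n_m (G := C_AbelianMonoid) (fun j => c j * INR (e j)) p q).
Proof.
  refine (is_derive_sum_n_m (V := AbsRing_NormedModule C_AbsRing)
    (fun j z => c j * cpow z (e j)) (fun j => c j * INR (e j)) _ p q _); intros j _.
  eapply (eq_ind _ (is_Cderive (fun z => c j * cpow z (e j)) (RtoC 1))).
  - apply is_Cderive_mult; [apply is_Cderive_const | apply is_Cderive_cpow].
  - rewrite !cpow_1; as_C_equation; ring.
Qed.

End PolynomialsAt1.

Lemma sum_n_m_weight_split (f : nat -> R) (n k m : nat) : (m <= k)%nat ->
  sum_n_m (fun j => (INR n + INR k - 2 * INR j) * f j) 1 m
  = INR n * sum_n_m f 1 m + sum_n_m (fun j => f j * INR (k - j)) 1 m
    - sum_n_m (fun j => f j * INR j) 1 m.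
Proof.
  induction m as [|m IH]; intros Hm.
  - rewrite !sum_n_m_zero by lia. change (0 = INR n * 0 + 0 - 0). ring.
  - rewrite !sum_n_Sm, IH, minus_INR by lia. unfold plus; simpl; ring.
Qed.

Section OmapAt1.
Local Open Scope C_scope.
Variables (n k : nat) (An Bn : nat -> R) (alpha : C).

Let S : C := A'cst k An + B'cst k Bn * alpha.
Let T : C := Acst n k An + Bcst n k Bn * alpha.

Lemma sum_acoef_weighted (w : nat -> R) (p q : nat) :
  sum_n_m (G := C_AbelianMonoid) (fun j => acoef An Bn alpha j * w j) p q
  = sum_n_m (fun j => An j * w j)%R p q + sum_n_m (fun j => Bn j * w j)%R p q * alpha.
Proof.
  rewrite <- sum_n_m_RtoC_affine; apply sum_n_m_ext; intros j.
  as_C_equation; unfold acoef; rewrite !RtoC_mult; ring.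
Qed.

Lemma sum_acoef (p q : nat) :
  sum_n_m (G := C_AbelianMonoid) (acoef An Bn alpha) p q
  = sum_n_m An p q + sum_n_m Bn p q * alpha.
Proof. apply sum_n_m_RtoC_affine. Qed.

Lemma Onum_at_1 : Onum k An Bn alpha 1 = S.
Proof.
  unfold Onum, S, A'cst, B'cst.
  rewrite cpow_1, (sum_monomials_at_1 (acoef An Bn alpha)), sum_acoef, RtoC_plus; ring.
Qed.

Lemma Oden_at_1 : Oden k An Bn alpha 1 = S.
Proof.
  unfold Oden, S, A'cst, B'cst.
  rewrite (sum_monomials_at_1 (acoef An Bn alpha)), sum_acoef, RtoC_plus; ring.
Qed.

Lemma is_Cderive_Onum_at_1 :
  is_Cderive (Onum k An Bn alpha) (RtoC 1)
    (INR k + sum_n_m (G := C_AbelianMonoid) (fun j => acoef An Bn alpha j * INR (k - j)) 1 k).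
Proof.
  eapply (eq_ind _ (is_Cderive (Onum k An Bn alpha) (RtoC 1))).
  - apply is_Cderive_plus; [apply is_Cderive_cpow | apply is_Cderive_sum_monomials_at_1].
  - now rewrite cpow_1, Cmult_1_r.
Qed.

Lemma is_Cderive_Oden_at_1 :
  is_Cderive (Oden k An Bn alpha) (RtoC 1)
    (sum_n_m (G := C_AbelianMonoid) (fun j => acoef An Bn alpha j * INR j) 1 k).
Proof.
  eapply (eq_ind _ (is_Cderive (Oden k An Bn alpha) (RtoC 1))).
  - apply is_Cderive_plus; [apply is_Cderive_const | apply is_Cderive_sum_monomials_at_1].
  - apply Cplus_0_l.
Qed.

Lemma multiplier_numerator_identity :
  T = INR n * S
      + (INR k + sum_n_m (G := C_AbelianMonoid) (fun j => acoef An Bn alpha j * INR (k - j)) 1 k)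
      - sum_n_m (G := C_AbelianMonoid) (fun j => acoef An Bn alpha j * INR j) 1 k.
Proof.
  unfold T, S, Acst, Bcst, A'cst, B'cst.
  rewrite !sum_acoef_weighted, !(sum_n_m_weight_split _ n k k) by lia.
  destruct alpha as [x y]; apply injective_projections; simpl; ring.
Qed.

Lemma is_Cderive_Omap_at_1 : S <> 0 -> is_Cderive (Omap n k An Bn alpha) (RtoC 1) (T / S).
Proof.
  intros HS.
  eapply (eq_ind _ (is_Cderive (Omap n k An Bn alpha) (RtoC 1))).
  - apply is_Cderive_mult; [apply is_Cderive_cpow|].
    apply is_Cderive_div;
      [rewrite Oden_at_1; exact HS | apply is_Cderive_Onum_at_1 | apply is_Cderive_Oden_at_1].
  - rewrite !Onum_at_1, !Oden_at_1, !cpow_1, multiplier_numerator_identity.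
    as_C_equation; field; exact HS.
Qed.

End OmapAt1.

Lemma fixed_point_type_of_multiplier (f : C -> C) (z0 T S : C) :
  fixed_point f z0 -> S <> RtoC 0 -> is_multiplier f z0 (T / S)%C ->
  (Cmod T < Cmod S -> attracting f z0) /\
  (Cmod T = Cmod S -> indifferent f z0) /\
  (Cmod T > Cmod S -> repelling f z0).
Proof.
  intros Hfix HS Hmul.
  assert (HmodS : 0 < Cmod S) by now apply Cmod_gt_0.
  assert (Hmod : Cmod (T / S) = Cmod T / Cmod S) by now apply Cmod_div.
  split; [|split]; intros Hcmp; (split; [exact Hfix | exists (T / S)%C; split; [exact Hmul|]]);
    rewrite Hmod.
  - apply Rlt_div_l; lra.
  - rewrite Hcmp; field; lra.
  - apply Rlt_div_r; lra.
Qed.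

Lemma Omap_fixed_point_multiplier (n k : nat) (An Bn : nat -> R) (alpha : C) :
  admissible k An Bn alpha ->
  let S := (A'cst k An + B'cst k Bn * alpha)%C in
  let T := (Acst n k An + Bcst n k Bn * alpha)%C in
  fixed_point (Omap n k An Bn alpha) 1 /\ S <> RtoC 0 /\
  is_multiplier (Omap n k An Bn alpha) 1 (T / S)%C.
Proof.
  intros [_ Hsum] S T.
  assert (HS : S <> RtoC 0).
  { intros HS0; apply Hsum; rewrite sum_acoef, <- HS0.
    unfold S, A'cst, B'cst; rewrite RtoC_plus; ring. }
  split; [|split; [exact HS|]].
  - unfold fixed_point, Omap; rewrite Onum_at_1, Oden_at_1, cpow_1; field; exact HS.
  - apply is_multiplier_of_is_Cderive, is_Cderive_Omap_at_1, HS.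
Qed.

Lemma Cmod_sqr (z : C) : Cmod z ^ 2 = Re z ^ 2 + Im z ^ 2.
Proof. apply pow2_sqrt; nra. Qed.

Section ModulusGap.
Variables (A B A' B' : R).

Definition modulus_gap (alpha : C) : R :=
  Cmod (A + B * alpha)%C ^ 2 - Cmod (A' + B' * alpha)%C ^ 2.

Lemma modulus_gap_expand (alpha : C) :
  modulus_gap alpha
  = (B ^ 2 - B' ^ 2) * (Re alpha ^ 2 + Im alpha ^ 2)
    + 2 * (A * B - A' * B') * Re alpha + (A ^ 2 - A' ^ 2).
Proof. unfold modulus_gap; rewrite !Cmod_sqr; destruct alpha as [x y]; simpl; ring. Qed.

Lemma modulus_gap_circle (alpha : C) :
  let D := B ^ 2 - B' ^ 2 in
  let c := (A * B - A' * B') / D in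
  let r := (A' * B - A * B') / D in
  D <> 0 ->
  (Cmod (alpha + c)%C = Rabs r -> modulus_gap alpha = 0) /\
  (Cmod (alpha + c)%C < Rabs r ->
     (D > 0 -> modulus_gap alpha < 0) /\ (D < 0 -> modulus_gap alpha > 0)) /\
  (Cmod (alpha + c)%C > Rabs r ->
     (D > 0 -> modulus_gap alpha > 0) /\ (D < 0 -> modulus_gap alpha < 0)).
Proof.
  intros D c r HD.
  assert (Hgap : modulus_gap alpha = D * (Cmod (alpha + c)%C ^ 2 - Rabs r ^ 2)).
  { rewrite modulus_gap_expand, Cmod_sqr, pow2_abs.
    unfold r, c, D in *; destruct alpha as [x y]; simpl; field; contradict HD; lra. }
  rewrite Hgap.
  pose proof (Cmod_ge_0 (alpha + c)%C); pose proof (Rabs_pos r).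
  split; [|split].
  - intros ->; ring.
  - intros Hlt.
    assert (Hsq : Cmod (alpha + c)%C ^ 2 - Rabs r ^ 2 < 0) by nra.
    split; intros HDs; nra.
  - intros Hgt.
    assert (Hsq : Cmod (alpha + c)%C ^ 2 - Rabs r ^ 2 > 0) by nra.
    split; intros HDs; nra.
Qed.

Lemma modulus_gap_parallel (alpha : C) : B = B' -> B <> 0 ->
  (A = A' -> modulus_gap alpha = 0) /\
  ((Re alpha < - (A + A') / (2 * B) /\ B * (A - A') > 0) \/
   (Re alpha > - (A + A') / (2 * B) /\ B * (A - A') < 0) -> modulus_gap alpha < 0) /\
  ((Re alpha > - (A + A') / (2 * B) /\ B * (A - A') > 0) \/
   (Re alpha < - (A + A') / (2 * B) /\ B * (A - A') < 0) -> modulus_gap alpha > 0).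
Proof.
  intros HBB HB.
  assert (Hgap : modulus_gap alpha = 2 * (B * (A - A')) * (Re alpha - - (A + A') / (2 * B)))
    by (rewrite modulus_gap_expand, <- HBB; field; exact HB).
  rewrite Hgap; split; [|split].
  - intros ->; ring.
  - intros [[Hx Hs] | [Hx Hs]]; nra.
  - intros [[Hx Hs] | [Hx Hs]]; nra.
Qed.

Lemma modulus_gap_antiparallel (alpha : C) : B = - B' -> B <> 0 ->
  (A = - A' -> modulus_gap alpha = 0) /\
  ((Re alpha < (A' - A) / (2 * B) /\ B * (A + A') > 0) \/
   (Re alpha > (A' - A) / (2 * B) /\ B * (A + A') < 0) -> modulus_gap alpha < 0) /\
  ((Re alpha > (A' - A) / (2 * B) /\ B * (A + A') > 0) \/
   (Re alpha < (A' - A) / (2 * B) /\ B * (A + A') < 0) -> modulus_gap alpha > 0).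
Proof.
  intros HBB HB.
  assert (Hgap : modulus_gap alpha = 2 * (B * (A + A')) * (Re alpha - (A' - A) / (2 * B)))
    by (rewrite modulus_gap_expand, HBB; field; lra).
  rewrite Hgap; split; [|split].
  - intros ->; ring.
  - intros [[Hx Hs] | [Hx Hs]]; nra.
  - intros [[Hx Hs] | [Hx Hs]]; nra.
Qed.

Lemma modulus_gap_constant (alpha : C) : B = 0 -> B' = 0 ->
  (Rabs A = Rabs A' -> modulus_gap alpha = 0) /\
  (Rabs A < Rabs A' -> modulus_gap alpha < 0) /\
  (Rabs A > Rabs A' -> modulus_gap alpha > 0).
Proof.
  intros HB HB'.
  assert (Hgap : modulus_gap alpha = Rabs A ^ 2 - Rabs A' ^ 2)
    by (rewrite modulus_gap_expand, HB, HB', !pow2_abs; ring).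
  rewrite Hgap; pose proof (Rabs_pos A); pose proof (Rabs_pos A').
  split; [|split]; intros Hcmp.
  - rewrite Hcmp; ring.
  - nra.
  - nra.
Qed.

End ModulusGap.

Lemma Omap_fixed_point_type (n k : nat) (An Bn : nat -> R) (alpha : C) :
  admissible k An Bn alpha ->
  let g := modulus_gap (Acst n k An) (Bcst n k Bn) (A'cst k An) (B'cst k Bn) alpha in
  (g < 0 -> attracting (Omap n k An Bn alpha) 1) /\
  (g = 0 -> indifferent (Omap n k An Bn alpha) 1) /\
  (g > 0 -> repelling (Omap n k An Bn alpha) 1).
Proof.
  intros Hadm g.
  destruct (Omap_fixed_point_multiplier n k An Bn alpha Hadm) as [Hfix [HS Hmul]].
  destruct (fixed_point_type_of_multiplier _ _ _ _ Hfix HS Hmul) as [Hatt [Hind Hrep]].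
  unfold g, modulus_gap.
  set (mT := Cmod (Acst n k An + Bcst n k Bn * alpha)%C) in *.
  set (mS := Cmod (A'cst k An + B'cst k Bn * alpha)%C) in *.
  assert (0 <= mT) by apply Cmod_ge_0; assert (0 <= mS) by apply Cmod_ge_0.
  split; [|split]; intros Hg.
  - apply Hatt; nra.
  - apply Hind, Rsqr_inj; unfold Rsqr; nra.
  - apply Hrep; nra.
Qed.

Lemma Omap_superattracting (n k : nat) (An Bn : nat -> R) :
  let A := Acst n k An in
  let B := Bcst n k Bn in
  B <> 0 -> admissible k An Bn (RtoC (- A / B)) ->
  superattracting (Omap n k An Bn (RtoC (- A / B))) 1.
Proof.
  intros A B HB Hadm.
  destruct (Omap_fixed_point_multiplier n k An Bn _ Hadm) as [Hfix [HS Hmul]].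
  split; [exact Hfix|].
  replace (RtoC 0)
    with ((A + B * RtoC (- A / B)) / (A'cst k An + B'cst k Bn * RtoC (- A / B)))%C;
    [exact Hmul|].
  rewrite <- RtoC_mult, <- RtoC_plus.
  replace (A + B * (- A / B)) with 0 by (field; exact HB).
  field; exact HS.
Qed.

Theorem proposition3p5 (n k : nat) (An Bn : nat -> R) :
  (1 <= n)%nat -> (1 <= k)%nat ->
  let A := Acst n k An in
  let B := Bcst n k Bn in
  let A' := A'cst k An in
  let B' := B'cst k Bn in
  let D := B ^ 2 - B' ^ 2 in
  let c := (A * B - A' * B') / D in
  let r := (A' * B - A * B') / D in
  let O := Omap n k An Bn in
  let adm := admissible k An Bn in
  (* z = 1 is a fixed point *)
  (forall alpha, adm alpha -> O alpha (RtoC 1) = RtoC 1) /\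
  (* case 1 : B^2 - B'^2 <> 0 *)
  (D <> 0 -> forall alpha, adm alpha ->
     (Cmod (Cplus alpha (RtoC c)) = Rabs r -> indifferent (O alpha) (RtoC 1)) /\
     (Cmod (Cplus alpha (RtoC c)) < Rabs r ->
        (D > 0 -> attracting (O alpha) (RtoC 1)) /\
        (D < 0 -> repelling (O alpha) (RtoC 1))) /\
     (Cmod (Cplus alpha (RtoC c)) > Rabs r ->
        (D > 0 -> repelling (O alpha) (RtoC 1)) /\
        (D < 0 -> attracting (O alpha) (RtoC 1)))) /\
  (* case 2(a) : B = B' <> 0 *)
  (B = B' -> B <> 0 -> forall alpha, adm alpha ->
     (A = A' -> indifferent (O alpha) (RtoC 1)) /\
     ((Re alpha < - (A + A') / (2 * B) /\ B * (A - A') > 0) \/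
      (Re alpha > - (A + A') / (2 * B) /\ B * (A - A') < 0) ->
        attracting (O alpha) (RtoC 1)) /\
     ((Re alpha > - (A + A') / (2 * B) /\ B * (A - A') > 0) \/
      (Re alpha < - (A + A') / (2 * B) /\ B * (A - A') < 0) ->
        repelling (O alpha) (RtoC 1))) /\
  (* case 2(b) : B = -B' <> 0 *)
  (B = - B' -> B <> 0 -> forall alpha, adm alpha ->
     (A = - A' -> indifferent (O alpha) (RtoC 1)) /\
     ((Re alpha < (A' - A) / (2 * B) /\ B * (A + A') > 0) \/
      (Re alpha > (A' - A) / (2 * B) /\ B * (A + A') < 0) ->
        attracting (O alpha) (RtoC 1)) /\
     ((Re alpha > (A' - A) / (2 * B) /\ B * (A + A') > 0) \/
      (Re alpha < (A' - A) / (2 * B) /\ B * (A + A') < 0) ->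
        repelling (O alpha) (RtoC 1))) /\
  (* case 2(c) : B = B' = 0 *)
  (B = 0 -> B' = 0 -> forall alpha, adm alpha ->
     (Rabs A = Rabs A' -> indifferent (O alpha) (RtoC 1)) /\
     (Rabs A < Rabs A' -> attracting (O alpha) (RtoC 1)) /\
     (Rabs A > Rabs A' -> repelling (O alpha) (RtoC 1))) /\
  (* superattracting at alpha = -A/B *)
  (B <> 0 -> adm (RtoC (- A / B)) -> superattracting (O (RtoC (- A / B))) (RtoC 1)).
Proof.
  intros _ _ A B A' B' D c r O adm.
  split; [|split; [|split; [|split; [|split]]]].
  - intros alpha Hadm; apply (Omap_fixed_point_multiplier n k An Bn alpha Hadm).
  - intros HD alpha Hadm.
    pose proof (Omap_fixed_point_type n k An Bn alpha Hadm).
    pose proof (modulus_gap_circle A B A' B' alpha HD).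
    cbv zeta in *; tauto.
  - intros HBB HB alpha Hadm.
    pose proof (Omap_fixed_point_type n k An Bn alpha Hadm).
    pose proof (modulus_gap_parallel A B A' B' alpha HBB HB).
    cbv zeta in *; tauto.
  - intros HBB HB alpha Hadm.
    pose proof (Omap_fixed_point_type n k An Bn alpha Hadm).
    pose proof (modulus_gap_antiparallel A B A' B' alpha HBB HB).
    cbv zeta in *; tauto.
  - intros HB HB' alpha Hadm.
    pose proof (Omap_fixed_point_type n k An Bn alpha Hadm).
    pose proof (modulus_gap_constant A B A' B' alpha HB HB').
    cbv zeta in *; tauto.
  - exact (Omap_superattracting n k An Bn).
Qed.
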